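(* Let $(\Omega,\mathcal F,P)$ be a probability space and $T:\Omega\to\Omega$ a measurable transformation preserving $P$ such that $(\Omega,\mathcal F,P,T)$ is ergodic. Let $b:\Omega\to\mathbb R$ and $r:\Omega\to(0,\infty)$ be random variables, and for $\omega\in\Omega$ let $\varphi_\omega(y)=b(\omega)+r(\omega)y$, $y\in\mathbb R$. Assume that the set $S=\{\varphi_\omega:\omega\in\Omega\}$ of affine maps is countable, with $P(\varphi_\omega=\varphi)>0$ for every $\varphi\in S$, that $b\in L^1(P)$, $\log r\in L^1(P)$ and $\int_\Omega\log r\,dP<0$. Set $r_0(\omega)=1$, $r_n(\omega)=r(\omega)r(T\omega)\cdots r(T^{n-1}\omega)$ for $n\ge1$, and define the (almost everywhere defined) random variable $$X(\omega)=\sum_{n\ge0}r_n(\omega)\,b(T^n\omega).$$ Let $P_X$ be the law of $X$ on $(\mathbb R,\mathcal B(\mathbb R))$, i.e. $P_X(A)=P(X^{-1}(A))$. Then $P_X$ is of pure type: it is either purely atomic, or absolutely continuous with respect to Lebesgue measure, or continuous and singular with respect to Lebesgue measure.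
   Context: Lebesgue measure on $\mathbb R$ is denoted $Leb$. *)

From HB Require Import structures.
From mathcomp Require Import all_boot all_order all_algebra.
From mathcomp Require Import all_classical all_reals all_analysis.
Set Implicit Arguments. Unset Strict Implicit. Unset Printing Implicit Defensive.
Import Order.TTheory GRing.Theory Num.Theory.
Import numFieldNormedType.Exports.
Local Open Scope classical_set_scope.
Local Open Scope ring_scope.

Definition measure_preserving d (Om : measurableType d) (R : realType)
  (P : probability Om R) (T : Om -> Om) : Prop :=
  measurable_fun setT T /\
  forall A : set Om, measurable A -> P (T @^-1` A) = P A.

Definition ergodic d (Om : measurableType d) (R : realType)
  (P : probability Om R) (T : Om -> Om) : Prop :=
  forall A : set Om, measurable A -> T @^-1` A = A ->
    P A = 0%E \/ P A = 1%E.

Definition rprod (Om : Type) (R : realType) (T : Om -> Om) (r : Om -> R)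
  (n : nat) (w : Om) : R :=
  \prod_(i < n) r (iter i T w).

(* X(w) = sum_{n>=0} r_n(w) b(T^n w), as the limit of partial sums
   (the library's default value where the series diverges) *)
Definition Xseries (Om : Type) (R : realType) (T : Om -> Om) (b r : Om -> R)
  (w : Om) : R :=
  limn (fun N => \sum_(0 <= n < N) rprod T r n w * b (iter n T w)).

Definition law d (Om : measurableType d) (R : realType)
  (P : probability Om R) (X : Om -> R) : set R -> \bar R :=
  fun A => P (X @^-1` A).

Definition purely_atomic (R : realType) (mu : set R -> \bar R) : Prop :=
  exists C : set R, countable C /\ mu (~` C) = 0%E.

Definition abs_continuous_Leb (R : realType) (mu : set R -> \bar R) : Prop :=
  forall A : set R, measurable A -> (@lebesgue_measure R) A = 0%E -> mu A = 0%E.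

Definition continuous_singular (R : realType) (mu : set R -> \bar R) : Prop :=
  (forall x : R, mu [set x] = 0%E) /\
  exists A : set R, measurable A /\ (@lebesgue_measure R) A = 0%E /\ mu (~` A) = 0%E.

From HB Require Import structures.
From mathcomp Require Import all_boot all_order all_algebra.
From mathcomp Require Import all_classical all_reals all_analysis.
From mathcomp Require Import measurable_realfun ring.
Import Order.TTheory GRing.Theory Num.Theory.
Import numFieldNormedType.Exports.
Local Open Scope classical_set_scope.
Local Open Scope ring_scope.
Set Implicit Arguments. Unset Strict Implicit. Unset Printing Implicit Defensive.

(* Call E ⊆ ℝ backward closed if φ_ω(z) ∈ E implies z ∈ E for every ω. The
   relation X = φ_ω(X ∘ T) makes {X ∈ E} sub-invariant under T, and a
   measurable sub-invariant set of an ergodic measure-preserving system has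
   probability 0 or 1; so P_X either charges no subset of E or is carried by E.
   The saturation of a Borel set A under the countable semigroup generated by
   the maps φ_ω is backward closed; it is countable when A is a point and
   Lebesgue-null when A is, because the φ_ω are affine with positive slope.
   Thus an atom confines P_X to a countable set and a charged null set confines
   it to a null set. *)

Section positive_affine.
Context {R : realType}.
Local Notation leb := (@lebesgue_measure R).

Definition pos_affine (f : R -> R) : Prop :=
  exists a c, 0 < c /\ f = (fun y => a + c * y).

Lemma pos_affine_comp f g : pos_affine f -> pos_affine g -> pos_affine (f \o g).
Proof.
move=> [a [c [c0 ->]]] [a' [c' [c'0 ->]]].
exists (a + c * a'), (c * c'); split; first exact: mulr_gt0.
by apply/funext => y /=; rewrite mulrDr addrA mulrA.
Qed.

Lemma measurable_pos_affine f : pos_affine f -> measurable_fun setT f.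
Proof.
by move=> [a [c [_ ->]]]; apply: measurable_funD => //; exact: measurable_funM.
Qed.

Lemma measurable_pos_affine_preimage f A :
  pos_affine f -> measurable A -> measurable (f @^-1` A).
Proof.
move=> /measurable_pos_affine mf mA.
by rewrite -[X in measurable X]setTI; exact: mf.
Qed.

Lemma pos_affine_inj f : pos_affine f -> injective f.
Proof. by move=> [a [c [c0 ->]]] y z /addrI /mulfI; apply; rewrite gt_eqF. Qed.

Lemma lebesgue_affine_preimage (a c : R) (c0 : 0 < c) A : measurable A ->
  leb A = (c%:E * leb ((fun y => a + c * y)%R @^-1` A))%E.
Proof.
set f : R -> measurableTypeR R := fun y => a + c * y.
have mf : measurable_fun setT f by apply: measurable_pos_affine; exists a, c.
move=> mA; apply: (@lebesgue_measure_unique R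
  (mscale (NngNum (ltW c0)) (pushforward leb f))) => //.
move=> _ [[x1 x2] _ <-]; rewrite /= /mscale /= /pushforward.
have -> : f @^-1` `]x1, x2]%classic = `](x1 - a) / c, (x2 - a) / c]%classic.
  apply/seteqP; split => y /=;
    by rewrite !in_itv /= ltr_pdivrMr // ler_pdivlMr // ltrBlDl lerBrDl (mulrC y).
rewrite !lebesgue_measure_itv /= !lte_fin ltr_pM2r ?invr_gt0 // ltrD2r.
case: ifP => _; last by rewrite mule0.
by rewrite -EFinM; congr EFin; field; rewrite gt_eqF.
Qed.

Lemma lebesgue_pos_affine_preimage0 f A : pos_affine f -> measurable A ->
  leb A = 0%E -> leb (f @^-1` A) = 0%E.
Proof.
move=> [a [c [c0 ->]]] mA; rewrite (lebesgue_affine_preimage a c0 mA).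
by move/eqP; rewrite mule_eq0 eqe gt_eqF //= => /eqP.
Qed.

End positive_affine.

Lemma countable_inj_preimage1 (T U : Type) (g : T -> U) (x : U) :
  injective g -> countable (g @^-1` [set x]).
Proof.
move=> ginj; have [[y gy]|nox] := pselect (exists y, g y = x).
  rewrite (_ : _ @^-1` _ = [set y]) ?countable1 //.
  by apply/seteqP; split => z /=; [rewrite -gy => /ginj|move=> ->].
rewrite (_ : _ @^-1` _ = set0) ?countable0 //.
by apply/seteqP; split => z //= gz; apply: nox; exists z.
Qed.

Section semigroup_preimage.
Context {R : realType} (f : nat -> R -> R).
Hypothesis f_pos_affine : forall n, pos_affine (f n).

Definition comp_seq (s : seq nat) : R -> R := foldr (fun i g => g \o f i) id s.

Definition semigroup_preimage (A : set R) : set R :=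
  [set y | exists s, A (comp_seq s y)].

Lemma pos_affine_comp_seq s : pos_affine (comp_seq s).
Proof.
elim: s => [|i s IHs] /=; last exact: pos_affine_comp.
by exists 0, 1; split => //; apply/funext => y; rewrite add0r mul1r.
Qed.

Lemma sub_semigroup_preimage A : A `<=` semigroup_preimage A.
Proof. by move=> y Ay; exists [::]. Qed.

Lemma semigroup_preimage_closed A n y :
  semigroup_preimage A (f n y) -> semigroup_preimage A y.
Proof. by move=> [s As]; exists (n :: s). Qed.

Lemma semigroup_preimage_bigcup A :
  semigroup_preimage A = \bigcup_k (comp_seq (odflt [::] (unpickle k)) @^-1` A).
Proof.
apply/seteqP; split => [y [s As]|y [k _ Ay]]; last by eexists; exact: Ay.
by exists (pickle s) => //; rewrite /preimage (_ : odflt _ _ = s) // pickleK.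
Qed.

Lemma measurable_semigroup_preimage A :
  measurable A -> measurable (semigroup_preimage A).
Proof.
move=> mA; rewrite semigroup_preimage_bigcup; apply: bigcupT_measurable => k.
exact: measurable_pos_affine_preimage (pos_affine_comp_seq _) mA.
Qed.

Lemma lebesgue_semigroup_preimage0 A : measurable A ->
  (@lebesgue_measure R) A = 0%E ->
  (@lebesgue_measure R) (semigroup_preimage A) = 0%E.
Proof.
move=> mA A0; apply/negligibleP; first exact: measurable_semigroup_preimage.
rewrite semigroup_preimage_bigcup; apply: negligible_bigcup => k.
have f_k := pos_affine_comp_seq (odflt [::] (unpickle k)).
apply/negligibleP; first exact: measurable_pos_affine_preimage f_k mA.
exact: lebesgue_pos_affine_preimage0 f_k mA A0.
Qed.

Lemma countable_semigroup_preimage1 x : countable (semigroup_preimage [set x]).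
Proof.
rewrite semigroup_preimage_bigcup; apply: bigcup_countable => // k _.
exact/countable_inj_preimage1/pos_affine_inj/pos_affine_comp_seq.
Qed.

End semigroup_preimage.

Lemma pure_type_from_saturation (R : realType) (mu : set R -> \bar R)
    (sat : set R -> set R) :
  (forall A, measurable A -> measurable (sat A)) ->
  (forall A, measurable A -> (@lebesgue_measure R) A = 0%E ->
     (@lebesgue_measure R) (sat A) = 0%E) ->
  (forall x, countable (sat [set x])) ->
  (forall A, measurable A -> mu A != 0%E -> mu (~` sat A) = 0%E) ->
  purely_atomic mu \/ abs_continuous_Leb mu \/ continuous_singular mu.
Proof.
move=> msat sat0 sat1 satP.
have [atomless|/existsNP[x /eqP mux]] := pselect (forall x, mu [set x] = 0%E).
  have [ac|/existsNP[A /not_implyP[mA /not_implyP[A0 /eqP muA]]]] :=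
    pselect (abs_continuous_Leb mu); first by right; left.
  right; right; split => //; exists (sat A).
  by split; [exact: msat|split; [exact: sat0|exact: satP]].
by left; exists (sat [set x]); split; [exact: sat1|exact: satP].
Qed.

Section perpetuity.
Context {Om : Type} {R : realType} (T : Om -> Om) (b r : Om -> R).

Definition partial_sum (N : nat) (w : Om) : R :=
  \sum_(0 <= n < N) rprod T r n w * b (iter n T w).

Lemma partial_sumS N w : partial_sum N.+1 w = b w + r w * partial_sum N (T w).
Proof.
rewrite /partial_sum big_nat_recl // /rprod big_ord0 mul1r mulr_sumr.
congr (_ + _); apply: eq_bigr => n _; rewrite big_ord_recl mulrA -iterSr.
by congr (_ * _ * _); apply: eq_bigr => i _; rewrite -iterSr.
Qed.

Lemma cvgn_partial_sumT w : r w != 0 ->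
  cvgn (partial_sum ^~ w) -> cvgn (partial_sum ^~ (T w)).
Proof.
move=> rw0 cvw.
have -> : partial_sum ^~ (T w) = fun N => (partial_sum N.+1 w - b w) / r w.
  by apply/funext => N; rewrite partial_sumS addrC addKr mulrC mulKf.
apply/cvg_ex; exists ((limn (partial_sum ^~ w) - b w) / r w).
apply: cvgM (cvgB _ (cvg_cst _)) (cvg_cst _).
by rewrite (cvg_shiftS (partial_sum ^~ w)).
Qed.

Lemma XseriesT w : cvgn (partial_sum ^~ (T w)) ->
  Xseries T b r w = b w + r w * Xseries T b r (T w).
Proof.
move=> cvTw; apply/cvg_lim => //; rewrite -/(partial_sum ^~ w) -cvg_shiftS /=.
under eq_fun do rewrite partial_sumS.
exact: cvgD (cvg_cst _) (cvgM (cvg_cst _) cvTw).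
Qed.

Lemma Xseries_backward_closed (E : set R) w : r w != 0 ->
  (forall z, E (b w + r w * z) -> E z) ->
  E (Xseries T b r w) -> E (Xseries T b r (T w)).
Proof.
move=> rw0 Eback; have [cvTw|dvTw] := pselect (cvgn (partial_sum ^~ (T w))).
  by rewrite XseriesT //; exact: Eback.
have dvw : ~ cvgn (partial_sum ^~ w) by move/(cvgn_partial_sumT rw0).
(* both sides take the junk value [point] of divergent limits *)
by rewrite /Xseries -/(partial_sum ^~ _) dvgP // -/(partial_sum ^~ _) dvgP.
Qed.

End perpetuity.

Lemma cvgn_esup_einfP (R : realType) (u : R^nat) :
  cvgn u <-> limn_esup (EFin \o u) = limn_einf (EFin \o u) /\
             limn_esup (EFin \o u) \is a fin_num.
Proof.
split=> [cvu|[esup_einf]].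
  suff /cvg_limn_einf_sup[-> ->] : EFin \o u @ \oo --> (limn u)%:E by [].
  by apply/fine_cvgP; split; [exact: nearW|exact: cvu].
case esupE : (limn_esup (EFin \o u)) => [l| |] // _.
have ul : EFin \o u @ \oo --> l%:E.
  apply: (@squeeze_cvge _ _ _ _ (einfs (EFin \o u)) _ (esups (EFin \o u))).
  - apply: nearW => n; apply/andP; split.
      by apply: ereal_inf_lbound; exists n => /=.
    by apply: ereal_sup_ubound; exists n => /=.
  - by have := @is_cvg_einfs _ (EFin \o u); rewrite -limn_einf_lim -esup_einf esupE.
  - by have := @is_cvg_esups _ (EFin \o u); rewrite -limn_esup_lim esupE.
by move/fine_cvgP : ul => [_ ul]; apply/cvg_ex; exists l.
Qed.

Section measurable_limn.
Context d (T : measurableType d) (R : realType) (h : (T -> R)^nat).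
Hypothesis mh : forall n, measurable_fun setT (h n).

Let hsup t := limn_esup (EFin \o h ^~ t).
Let hinf t := limn_einf (EFin \o h ^~ t).

Let measurable_hsup : measurable_fun setT hsup.
Proof.
apply: (@measurable_fun_limn_esup _ _ _ _ (fun n t => (h n t)%:E)) => n.
exact/measurable_EFinP.
Qed.

Let measurable_hinf : measurable_fun setT hinf.
Proof.
apply: measurableT_comp; first exact: oppe_measurable.
apply: (@measurable_fun_limn_esup _ _ _ _ (fun n t => - (h n t)%:E)%E) => n.
exact/measurableT_comp/measurable_EFinP.
Qed.

Lemma measurable_cvgn : measurable [set t | cvgn (h ^~ t)].
Proof.
rewrite [X in measurable X](_ : _ =
    [set t | hsup t = hinf t] `&` [set t | hsup t \is a fin_num]).
  apply: measurableI; rewrite -[X in measurable X]setTI.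
    exact: measurable_eqe.
  exact: emeasurable_fin_num.
by apply/seteqP; split => t /cvgn_esup_einfP.
Qed.

Lemma measurable_fun_limn : measurable_fun setT (fun t => limn (h ^~ t)).
Proof.
rewrite -(setUv [set t | cvgn (h ^~ t)]).
apply/measurable_funU; first exact: measurable_cvgn.
  exact/measurableC/measurable_cvgn.
split; first by apply: measurable_fun_cvg => [n|t]; [exact: measurable_funTS|].
apply: (eq_measurable_fun (cst point)) => [t|]; last exact: measurable_cst.
by rewrite inE => /dvgP.
Qed.

End measurable_limn.

Section measurable_Xseries.
Context d (Om : measurableType d) (R : realType) (T : Om -> Om) (b r : Om -> R).
Hypotheses (mT : measurable_fun setT T) (mb : measurable_fun setT b)
  (mr : measurable_fun setT r).

Lemma measurable_iter n : measurable_fun setT (iter n T).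
Proof.
by elim: n => [|n IHn] /=; [exact: measurable_id|exact: measurableT_comp].
Qed.

Lemma measurable_rprod n : measurable_fun setT (rprod T r n).
Proof.
by apply: measurable_prod => i _; exact: measurableT_comp (measurable_iter _).
Qed.

Lemma measurable_partial_sum N : measurable_fun setT (partial_sum T b r N).
Proof.
apply: measurable_sum => n; apply: measurable_funM; first exact: measurable_rprod.
exact: measurableT_comp (measurable_iter _).
Qed.

Lemma measurable_Xseries : measurable_fun setT (Xseries T b r).
Proof. exact: measurable_fun_limn measurable_partial_sum. Qed.

End measurable_Xseries.

Section ergodic_subinvariant.
Context d (Om : measurableType d) (R : realType) (P : probability Om R)
  (T : Om -> Om).
Hypothesis PT : measure_preserving P T.

Lemma measurable_iter_preimage n A :
  measurable A -> measurable (iter n T @^-1` A).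
Proof.
by move=> mA; rewrite -[X in measurable X]setTI; exact: (measurable_iter PT.1 n).
Qed.

Lemma measure_preserving_iter n A : measurable A -> P (iter n T @^-1` A) = P A.
Proof.
elim: n => [//|n IHn] mA.
have -> : iter n.+1 T = iter n T \o T by apply/funext => w; rewrite iterSr.
by rewrite comp_preimage PT.2 ?IHn //; exact: measurable_iter_preimage.
Qed.

Lemma ergodic_subinvariant B : ergodic P T -> measurable B ->
  B `<=` T @^-1` B -> P B = 0%E \/ P B = 1%E.
Proof.
move=> erg mB BTB; pose F n := iter n T @^-1` B.
have mF n : measurable (F n) by exact: measurable_iter_preimage.
have ndF : nondecreasing_seq F.
  by apply/nondecreasing_seqP => n; rewrite subsetEset => w /BTB.
pose U := \bigcup_n F n.
have mU : measurable U by exact: bigcupT_measurable.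
have TU : T @^-1` U = U.
  have FS n : F n.+1 = T @^-1` F n.
    by apply/seteqP; split => w; rewrite /F /= -iterS iterSr.
  apply/seteqP; split => w [n _ Fn]; first by exists n.+1; rewrite // FS.
  exists n => //; change ((T @^-1` F n) w); rewrite -FS.
  by move: (ndF _ _ (leqnSn n)); rewrite subsetEset; apply.
suff <- : P U = P B by exact: erg.
have /cvg_lim <- // := nondecreasing_cvg_mu (mu := P) mF mU ndF.
rewrite (_ : P \o F = cst (P B)) ?lim_cst //.
by apply/funext => n /=; exact: measure_preserving_iter.
Qed.

End ergodic_subinvariant.

Lemma law_subinvariant_setC0 d (Om : measurableType d) (R : realType)
    (P : probability Om R) (T : Om -> Om) (X : Om -> R) (A E : set R) :
  measure_preserving P T -> ergodic P T -> measurable_fun setT X ->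
  measurable A -> measurable E -> A `<=` E ->
  (forall w, E (X w) -> E (X (T w))) ->
  law P X A != 0%E -> law P X (~` E) = 0%E.
Proof.
move=> PT erg mX mA mE AE EXT /eqP lawA0.
have mpre B : measurable B -> measurable (X @^-1` B).
  by move=> mB; rewrite -[X in measurable X]setTI; exact: mX.
have [PE0|PE1] := ergodic_subinvariant PT erg (mpre _ mE) EXT.
  by exfalso; apply/lawA0/(subset_measure0 (mpre _ mA) (mpre _ mE)) => // w /AE.
by rewrite /law -preimage_setC probability_setC ?PE1 ?subee //; exact: mpre.
Qed.

Lemma countable_range_enum (T : pointedType) (U : Type) (h : T -> U) :
  countable (range h) -> exists g : nat -> T, forall x, exists n, h (g n) = h x.
Proof.
move=> /countable_injP[f finj].
exists (fun n => get [set x | f (h x) = n]) => x; exists (f (h x)).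
have /finj : f (h (get [set y | f (h y) = f (h x)])) = f (h x).
  exact: (@xgetPex _ point [set y | f (h y) = f (h x)] (ex_intro _ x erefl)).
by apply; rewrite inE; eexists.
Qed.

Unset Implicit Arguments. Set Strict Implicit.

Theorem mainTheorem1 (d : measure_display) (Om : measurableType d)
  (R : realType) (P : probability Om R) (T : Om -> Om)
  (b r : Om -> R) :
  measure_preserving P T ->
  ergodic P T ->
  measurable_fun setT b ->
  measurable_fun setT r ->
  (forall w, 0 < r w) ->
  countable (range (fun w => fun y : R => b w + r w * y)) ->
  (forall w0 : Om, (0 < P [set w | (fun y : R => (b w + r w * y)%R) =
                                    (fun y : R => (b w0 + r w0 * y)%R)])%E) ->
  P.-integrable setT (EFin \o b) ->
  P.-integrable setT (EFin \o (fun w => ln (r w))) ->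
  (\int[P]_w (ln (r w))%:E < 0)%E ->
  let mu := law P (Xseries T b r) in
  purely_atomic mu \/ abs_continuous_Leb mu \/ continuous_singular mu.
Proof.
(* only forward invariance is used *)
move=> PT erg mb mr rpos /countable_range_enum[g gP] _ _ _ _ mu.
pose f n y := b (g n) + r (g n) * y.
have f_aff n : pos_affine (f n) by exists (b (g n)), (r (g n)).
apply: (pure_type_from_saturation (sat := semigroup_preimage f)).
- exact: measurable_semigroup_preimage.
- exact: lebesgue_semigroup_preimage0.
- exact: countable_semigroup_preimage1.
move=> A mA; apply: (law_subinvariant_setC0 PT erg (measurable_Xseries PT.1 mb mr)
  mA (measurable_semigroup_preimage f_aff mA) (@sub_semigroup_preimage _ f A)) => w.
apply: Xseries_backward_closed; first by rewrite gt_eqF.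
have [n /(congr1 (fun h => h _)) fnE] := gP w.
by move=> z; rewrite -fnE; exact: semigroup_preimage_closed.
Qed.
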